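(* Let $E$ be a (Hausdorff, real) topological vector space. Every infinite absolutely Cauchy summable subset $S$ of $E$ contains an infinite subset $B$ such that the linear Kalton map $lK_B:lS_B\to E$ is a topologically isomorphic embedding.
   Context: For $b\in E$, $\mathbb{R}b=\{rb:r\in\mathbb{R}\}$ with the subspace topology. For $B\subseteq E\setminus\{0\}$, $lS_B=\bigoplus_{b\in B}\mathbb{R}b$ is the set of finitely supported elements of $\prod_{b\in B}\mathbb{R}b$, with the subspace topology of the Tychonoff product topology (so $lS_B\cong\mathbb{R}^{(B)}$). The linear Kalton map $lK_B:lS_B\to E$ is the unique linear map extending each inclusion $\mathbb{R}b\to E$, $b\in B$. A subset $S\subseteq E$ is absolutely Cauchy summable if for every neighbourhood $U$ of $0$ there is a finite $F\subseteq S$ such that the additive subgroup generated by $S\setminus F$ is contained in $U$. *)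

From HB Require Import structures.
From mathcomp Require Import all_boot all_order all_algebra.
From mathcomp Require Import all_classical all_reals all_analysis.
Set Implicit Arguments. Unset Strict Implicit. Unset Printing Implicit Defensive.
Import Order.TTheory GRing.Theory Num.Theory.
Import numFieldTopology.Exports.
Local Open Scope classical_set_scope.
Local Open Scope ring_scope.

Definition add_subgroup {V : zmodType} (G : set V) : Prop :=
  G 0 /\ forall x y, G x -> G y -> G (x - y).

Definition gen_subgroup {V : zmodType} (A : set V) : set V :=
  [set x | forall G : set V, add_subgroup G -> A `<=` G -> G x].

Definition abs_cauchy_summable {E : topologicalZmodType} (S : set E) : Prop :=
  forall U : set E, nbhs (0 : E) U ->
    exists F : set E, [/\ finite_set F, F `<=` S & gen_subgroup (S `\` F) `<=` U].

Definition supp {E : Type} {R : realType} (f : E -> R) : set E :=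
  [set x | f x != 0].

(* lS_B : finitely supported real families indexed by B, realised as the
   functions E -> R with finite support contained in B, with the topology
   induced by the product (pointwise) topology. *)
Definition lS_set {R : realType} {E : Type} (B : set E) : set {ptws E -> R} :=
  [set f | finite_set (supp f) /\ supp f `<=` B].

Definition lS {R : realType} {E : Type} (B : set E) : topologicalType :=
  set_type (@lS_set R E B).

Definition lK {R : realType} {E : topologicalLmodType R} (B : set E)
  (f : @lS R E B) : E :=
  (\sum_(b \in supp (set_val f)) (set_val f b) *: b)%R.

Definition topological_embedding {X Y : topologicalType} (f : X -> Y) : Prop :=
  [/\ injective f, continuous f &
      forall U : set X, open U -> exists V : set Y, open V /\ U = f @^-1` V].

(* Pick b_0, b_1, ... in S one at a time, together with
   neighbourhoods W_0, W_1, ... of 0, such that a combination sum_(i < N) c_i b_i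
   lying in W_n has |c_i| < 1 for all i < n, while every tail combination
   sum_(n <= i < N) c_i b_i lies in W_n.  A next vector always exists: absolute
   Cauchy summability puts whole lines R e (e in S outside a finite set) inside
   any neighbourhood of 0, and a Hausdorff neighbourhood of 0 missing the nonzero
   e can be shrunk to miss e + span(b_0, ..., b_(n-1)).  The coefficient bounds
   make lK injective and open onto its image; absolute Cauchy summability makes
   the tails uniformly small, hence lK continuous. *)

From HB Require Import structures.
From mathcomp Require Import all_boot all_order all_algebra.
From mathcomp Require Import all_classical all_reals all_analysis.
From mathcomp Require Import ring lra.
Import numFieldTopology.Exports.
Import Order.TTheory GRing.Theory Num.Theory.
Local Open Scope classical_set_scope.
Local Open Scope ring_scope.
Set Implicit Arguments. Unset Strict Implicit. Unset Printing Implicit Defensive.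

Section TopologicalLmodule.
Variables (R : realType) (E : topologicalLmodType R).

Definition balanced (V : set E) := forall (r : R) x, `|r| <= 1 -> V x -> V (r *: x).

Lemma balancedN (V : set E) x : balanced V -> V x -> V (- x).
Proof. by move=> Vb Vx; rewrite -scaleN1r; apply: Vb; rewrite // normrN normr1. Qed.

Lemma nbhs0_add (U : set E) : nbhs 0 U ->
  exists2 V : set E, nbhs 0 V & forall x y, V x -> V y -> U (x + y).
Proof.
move=> U0; have := @add_continuous E (0, 0) U.
rewrite /= addr0 => /(_ U0) [[P Q] /= [P0 Q0] PQ].
exists (P `&` Q); first exact: filterI.
by move=> x y [Px _] [_ Qy]; exact: (PQ (x, y)).
Qed.

Lemma nbhs0_scale_small (U : set E) : nbhs 0 U ->
  exists2 d : R, 0 < d & exists2 V : set E, nbhs 0 V &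
     forall r x, `|r| < d -> V x -> U (r *: x).
Proof.
move=> U0; have := @scale_continuous R E (0, 0) U.
rewrite /= scale0r => /(_ U0) [[P Q] /= [/nbhs_ballP [d d0 Pd] Q0] PQ].
exists d => //; exists Q => // r x rd Qx.
apply: (PQ (r, x)); split => //=; apply: Pd.
by rewrite /ball /= sub0r normrN.
Qed.

Lemma nbhs0_scalev (U : set E) (x : E) : nbhs 0 U ->
  exists2 d : R, 0 < d & forall r, `|r| < d -> U (r *: x).
Proof.
move=> U0; have := @scale_continuous R E (0, x) U.
rewrite /= scale0r => /(_ U0) [[P Q] /= [/nbhs_ballP [d d0 Pd] Qx] PQ].
exists d => // r rd; apply: (PQ (r, x)); split => /=; last exact: nbhs_singleton.
by apply: Pd; rewrite /ball /= sub0r normrN.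
Qed.

Lemma nbhs0_scaler (U : set E) (t : R) : nbhs 0 U -> nbhs 0 [set x | U (t *: x)].
Proof.
move=> U0; have := @scale_continuous R E (t, 0) U.
rewrite /= scaler0 => /(_ U0) [[P Q] /= [Pt Q0] PQ].
apply: filterS Q0 => x Qx; apply: (PQ (t, x)); split => //=.
exact: nbhs_singleton.
Qed.

Lemma nbhs_translate0 (U : set E) (a : E) : nbhs a U -> nbhs 0 [set y | U (a + y)].
Proof.
move=> Ua; have := @add_continuous E (a, 0) U.
rewrite /= addr0 => /(_ Ua) [[P Q] /= [Pa Q0] PQ].
apply: filterS Q0 => y Qy; apply: (PQ (a, y)); split => //=.
exact: nbhs_singleton.
Qed.

Lemma nbhs0_translate (U : set E) (a : E) : nbhs 0 U -> nbhs a [set y | U (y - a)].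
Proof.
move=> U0; have := @add_continuous E (a, - a).
rewrite /continuous_at /= subrr => /(_ U U0) [[P Q] /= [Pa Qa] PQ].
apply: filterS Pa => y Py; apply: (PQ (y, - a)); split => //=.
exact: nbhs_singleton.
Qed.

Lemma nbhs0_balanced_sub (U : set E) : nbhs 0 U ->
  exists V : set E, [/\ nbhs 0 V, V `<=` U & balanced V].
Proof.
move=> U0; have [d d0 [W W0 dW]] := nbhs0_scale_small U0.
exists [set x | forall r : R, `|r| <= 1 -> U (r *: x)]; split.
- apply: filterS (nbhs0_scaler (2 / d) W0) => x Wx r r1.
  have -> : r *: x = (r * (d / 2)) *: ((2 / d) *: x).
    by rewrite scalerA; congr (_ *: _); field; rewrite gt_eqF.
  apply: dW => //; rewrite normrM (@le_lt_trans _ _ `|d / 2|) //.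
    by rewrite -[leRHS]mul1r ler_wpM2r.
  by rewrite gtr0_norm ?divr_gt0 // ltr_pdivrMr // ltr_pMr // ltr1n.
- by move=> x /(_ 1); rewrite normr1 scale1r; apply.
- move=> r x r1 Vx s s1; rewrite scalerA; apply: Vx.
  by rewrite normrM mulr_ile1.
Qed.

Lemma nbhs0_balanced_half (U : set E) : nbhs 0 U ->
  exists V : set E, [/\ nbhs 0 V, balanced V & forall x y, V x -> V y -> U (x + y)].
Proof.
move=> /nbhs0_add [V V0 VU]; have [W [W0 WV Wb]] := nbhs0_balanced_sub V0.
by exists W; split => // x y /WV Vx /WV Vy; exact: VU.
Qed.

Lemma hausdorff_nbhs0_sep (x : E) : hausdorff_space E -> x != 0 ->
  exists2 U : set E, nbhs 0 U & ~ U x.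
Proof.
move=> hE /negP x0; apply: contrapT => hU; apply: x0.
apply/eqP/esym/hE => A B A0 Bx; exists x; split; last exact: nbhs_singleton.
by apply: contrapT => Ax; apply: hU; exists A.
Qed.

Lemma small_coef_comb (U : set E) (x : nat -> E) (k : nat) : nbhs 0 U ->
  exists2 d : R, 0 < d & forall c : nat -> R,
    (forall i, (i < k)%N -> `|c i| < d) -> U (\sum_(i < k) c i *: x i).
Proof.
elim: k U => [|k IH] U U0.
  by exists 1 => // c _; rewrite big_ord0; exact: nbhs_singleton.
have [V V0 VU] := nbhs0_add U0.
have [d1 d10 H1] := IH _ V0; have [d2 d20 H2] := nbhs0_scalev (x k) V0.
exists (Num.min d1 d2) => [|c hc]; first by rewrite lt_min d10 d20.
rewrite big_ord_recr /=; apply: VU.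
  by apply: H1 => i ik; have /(_ (ltnW ik)) := hc i; rewrite lt_min => /andP[].
by apply: H2; have := hc k (ltnSn k); rewrite lt_min => /andP[].
Qed.

End TopologicalLmodule.

Section GeneratedSubgroup.
Variables (V : zmodType) (A : set V).

Lemma gen_subgroup_sub : A `<=` gen_subgroup A.
Proof. by move=> x Ax G _; apply. Qed.

Lemma gen_subgroup0 : gen_subgroup A 0.
Proof. by move=> G []. Qed.

Lemma gen_subgroupB x y :
  gen_subgroup A x -> gen_subgroup A y -> gen_subgroup A (x - y).
Proof. by move=> Ax Ay G GG AG; apply: GG.2; [exact: Ax | exact: Ay]. Qed.

Lemma gen_subgroupN x : gen_subgroup A x -> gen_subgroup A (- x).
Proof.
by move=> Ax; rewrite -sub0r; apply: gen_subgroupB; first exact: gen_subgroup0.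
Qed.

Lemma gen_subgroupD x y :
  gen_subgroup A x -> gen_subgroup A y -> gen_subgroup A (x + y).
Proof. by move=> Ax /gen_subgroupN Ay; rewrite -[y]opprK; exact: gen_subgroupB. Qed.

Lemma gen_subgroupMz x (z : int) : gen_subgroup A x -> gen_subgroup A (x *~ z).
Proof.
have gen_subgroupMn n : gen_subgroup A x -> gen_subgroup A (x *+ n).
  move=> Ax; elim: n => [|n IH]; first by rewrite mulr0n; exact: gen_subgroup0.
  by rewrite mulrS; exact: gen_subgroupD.
move=> Ax; case: z => n /=; first exact: gen_subgroupMn.
by rewrite NegzE mulrNz; apply: gen_subgroupN; exact: gen_subgroupMn.
Qed.

Lemma gen_subgroup_sum k (f : nat -> V) :
  (forall i, (i < k)%N -> gen_subgroup A (f i)) -> gen_subgroup A (\sum_(i < k) f i).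
Proof.
move=> Af; apply: big_ind; [exact: gen_subgroup0 | exact: gen_subgroupD |].
by move=> [i ik] _; exact: Af.
Qed.

Lemma gen_subgroupS (B : set V) : A `<=` B -> gen_subgroup A `<=` gen_subgroup B.
Proof. by move=> AB x Bx G GG BG; apply: Bx => // y /AB; exact: BG. Qed.

End GeneratedSubgroup.

Lemma abs_cauchy_summableS (E : topologicalZmodType) (A S : set E) :
  A `<=` S -> abs_cauchy_summable S -> abs_cauchy_summable A.
Proof.
move=> AS hS U /hS [F [Ffin FS FU]].
exists (A `&` F); split; [exact: finite_setIr | exact: subIsetl |].
apply: subset_trans FU; apply: gen_subgroupS => x [Ax nF].
by split; [exact: AS | move=> Fx; apply: nF].
Qed.

Section AbsCauchySummable.
Variables (R : realType) (E : topologicalLmodType R) (S : set E).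
Hypothesis hS : abs_cauchy_summable S.

Lemma abs_cauchy_summable_span (U : set E) : nbhs 0 U ->
  exists F : set E, finite_set F /\
    forall k (x : nat -> E) (c : nat -> R),
      (forall i, (i < k)%N -> (S `\` F) (x i)) -> U (\sum_(i < k) c i *: x i).
Proof.
move=> U0; have [V [V0 Vb VU]] := nbhs0_balanced_half U0.
have [F [Ffin _ FV]] := hS V0.
exists F; split => // k x c hx.
have [d d0 Hd] := small_coef_comb x k V0.
pose N := Num.Def.archi_bound d^-1.
have dN : d^-1 < N%:R by apply: archi_boundP; rewrite invr_ge0 ltW.
have N0 : 0 < (N%:R : R) by apply: lt_trans dN; rewrite invr_gt0.
(* c_i = q_i / N + r_i with q_i integral: the q-part is 1/N times an element of
   the generated subgroup, and |r_i| < 1/N < d. *)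
pose q i := Num.floor (N%:R * c i).
have -> : \sum_(i < k) c i *: x i = N%:R^-1 *: (\sum_(i < k) x i *~ q i) +
                                   \sum_(i < k) (c i - N%:R^-1 * (q i)%:~R) *: x i.
  rewrite scaler_sumr -big_split; apply: eq_bigr => i _ /=.
  by rewrite -scaler_int scalerA -scalerDl addrC subrK.
apply: VU.
  apply: Vb.
    rewrite normfV ger0_norm; last exact: ltW.
    by rewrite invf_le1 // ler1n -(ltr0n R).
  apply: FV; apply: (gen_subgroup_sum (f := fun i => x i *~ q i)) => i ik.
  by apply: gen_subgroupMz; apply: gen_subgroup_sub; exact: hx.
apply: (Hd (fun i => c i - N%:R^-1 * (q i)%:~R)) => i _.
have /andP[qle qgt] := floor_itv (N%:R * c i).
rewrite -[c i](mulKf (lt0r_neq0 N0)) -mulrBr normrM ger0_norm ?invr_ge0 ?ltW //.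
apply: (@le_lt_trans _ _ N%:R^-1); last by rewrite -(invrK d) ltf_pV2 ?posrE ?invr_gt0.
rewrite -[leRHS]mulr1 ler_wpM2l ?invr_ge0 ?ltW // ger0_norm ?subr_ge0 //.
by move: qgt; rewrite intrD1 /q; lra.
Qed.

Lemma abs_cauchy_summable_line (U : set E) : infinite_set S -> nbhs 0 U ->
  exists2 e, (S `\` [set 0]) e & forall r, U (r *: e).
Proof.
move=> Sinf /abs_cauchy_summable_span [F [Ffin FU]].
have /set0P [e [Se /not_orP [Fe e0]]] : S `\` (F `|` [set 0]) != set0.
  apply/eqP => SF0; apply: (infinite_setD Sinf (B := F `|` [set 0])).
    by rewrite finite_setU; split => //; exact: finite_set1.
  by rewrite SF0; exact: finite_set0.
exists e => // r; have := FU 1%N (fun=> e) (fun=> r).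
by rewrite big_ord1; apply=> i _.
Qed.

End AbsCauchySummable.

Lemma sum_ord_split (V : nmodType) (f : nat -> V) n N : (n <= N)%N ->
  \sum_(i < N) f i = \sum_(i < n) f i + \sum_(i < N - n) f (n + i)%N.
Proof. by move=> nN; rewrite -[in LHS](subnKC nN) big_split_ord. Qed.

Lemma nat_rec_choice (T : Type) (P : nat -> T -> Prop) (Q : nat -> T -> T -> Prop)
    (x0 : T) : P 0%N x0 -> (forall n x, P n x -> exists y, P n.+1 y /\ Q n x y) ->
  exists f : nat -> T, forall n, P n (f n) /\ Q n (f n) (f n.+1).
Proof.
move=> P0 PQ.
have /choice [g Hg] : forall nx : nat * T,
    exists y, P nx.1 nx.2 -> P nx.1.+1 y /\ Q nx.1 nx.2 y.
  move=> [n x]; have [/PQ [y Hy]|nPx] := pselect (P n x); first by exists y.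
  by exists x => /nPx.
pose f := fix f n := if n is m.+1 then g (m, f m) else x0.
have Pf n : P n (f n) by elim: n => //= n IH; exact: (Hg (n, f n) IH).1.
by exists f => n; split => //; exact: (Hg (n, f n) (Pf n)).2.
Qed.

Lemma sum_scale_delta (R : pzRingType) (V : lmodType R) (x : nat -> V) N j (a : R) :
  (j < N)%N -> \sum_(i < N) (if i == j :> nat then a else 0) *: x i = a *: x j.
Proof.
move=> jN; rewrite (bigD1 (Ordinal jN)) //= eqxx big1 ?addr0 // => k kj.
by rewrite ifN ?scale0r // -(inj_eq val_inj).
Qed.

Lemma finite_nat_ub (A : set nat) : finite_set A -> exists N, A `<=` `I_N.
Proof.
move=> fA; exists (\max_(i <- finmap.enum_fset (fset_set A)) i).+1 => i Ai.
by rewrite /= ltnS (leq_bigmax_seq i) // in_fset_set // inE.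
Qed.

Section CoefficientControl.
Variables (R : realType) (E : topologicalLmodType R).

Definition coef_bounded (n : nat) (x : nat -> E) (P : set E) :=
  forall c : nat -> R, P (\sum_(i < n) c i *: x i) -> forall i, (i < n)%N -> `|c i| < 1.

(* The first n coordinate functionals on the span of b are equicontinuous at 0. *)
Definition coef_controlled (b : nat -> E) := forall n, exists2 W : set E, nbhs 0 W &
  forall N (c : nat -> R), (n <= N)%N -> W (\sum_(i < N) c i *: b i) ->
    forall i, (i < n)%N -> `|c i| < 1.

Section Extension.
Hypothesis hE : hausdorff_space E.
Variables (n : nat) (x : nat -> E) (P V : set E) (e : E).
Hypotheses (V0 : nbhs 0 V) (VP : forall y z, V y -> V z -> P (y - z)).
Hypotheses (Pc : coef_bounded n x P) (Ve : forall r, V (r *: e)) (e0 : e != 0).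

Lemma nbhs0_avoiding_translate_span :
  exists2 O : set E, nbhs 0 O & forall c : nat -> R, ~ O (e + \sum_(i < n) c i *: x i).
Proof.
have [Q1 Q10 Q1e] := hausdorff_nbhs0_sep hE e0.
have [Q2 [Q20 Q2b Q2Q1]] := nbhs0_balanced_half Q10.
have [d d0 Hd] := small_coef_comb x n Q20.
exists (Q2 `&` [set y | V (d^-1 *: y)]) => [|c [Q2el Vel]].
  by apply: filterI => //; exact: nbhs0_scaler.
set l := \sum_(i < n) c i *: x i in Q2el Vel.
(* Rescaled by 1/d, l falls into P, so its coefficients are below d, l lies in Q2,
   and e = (e + l) - l lies in Q1. *)
have Pl : P (\sum_(i < n) (d^-1 * c i) *: x i).
  have -> : \sum_(i < n) (d^-1 * c i) *: x i = d^-1 *: (e + l) - d^-1 *: e.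
    rewrite scalerDr addrAC subrr add0r /l scaler_sumr.
    by apply: eq_bigr => i _; rewrite scalerA.
  exact: VP.
have Q2l : Q2 l.
  apply: Hd => i ilt; have := @Pc (fun i => d^-1 * c i) Pl i ilt.
  by rewrite normrM gtr0_norm ?invr_gt0 // mulrC ltr_pdivrMr // mul1r.
by apply: Q1e; have := Q2Q1 _ _ Q2el (balancedN Q2b Q2l); rewrite addrK.
Qed.

Lemma coef_bounded_extend : exists P' : set E,
  [/\ nbhs 0 P', P' `<=` V & coef_bounded n.+1 (fun i => if i == n then e else x i) P'].
Proof.
have [U U0 Ue] := nbhs0_avoiding_translate_span.
have [P' [P'0 P'UV P'b]] := nbhs0_balanced_sub (filterI U0 V0).
exists P'; split => [//|y /P'UV []//|c].
rewrite big_ord_recr /= eqxx.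
under eq_bigr => i _ do rewrite ltn_eqF //.
set l := \sum_(i < n) c i *: x i => P'l.
have cn : `|c n| < 1.
  rewrite ltNge; apply/negP => cn1.
  have cn0 : c n != 0 by rewrite -normr_gt0 (lt_le_trans _ cn1).
  have P'cl : P' ((c n)^-1 *: (l + c n *: e)).
    by apply: P'b P'l; rewrite normfV invf_le1 // (lt_le_trans _ cn1).
  have [+ _] := P'UV _ P'cl.
  rewrite scalerDr scalerA mulVf // scale1r addrC /l scaler_sumr.
  under eq_bigr => i _ do rewrite scalerA.
  exact: (Ue (fun i => (c n)^-1 * c i)).
move=> i; rewrite ltnS leq_eqVlt => /orP [/eqP -> // | ilt].
apply: (Pc (c := c)) => //.
have -> : \sum_(i < n) c i *: x i = (l + c n *: e) - c n *: e by rewrite addrK.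
by apply: VP => //; have /P'UV [] := P'l.
Qed.

End Extension.

Section ControlledSequence.
Variable b : nat -> E.
Hypothesis b_ctrl : coef_controlled b.

Lemma coef_controlled_free N (c : nat -> R) : \sum_(i < N) c i *: b i = 0 ->
  forall i, (i < N)%N -> c i = 0.
Proof.
move=> sum0 i iN; apply/eqP; apply: contraT => ci0.
have [W W0 Wc] := b_ctrl N; pose t := 2 / `|c i|.
have Wt : W (\sum_(k < N) (t * c k) *: b k).
  have -> : \sum_(k < N) (t * c k) *: b k = t *: \sum_(k < N) c k *: b k.
    by rewrite scaler_sumr; apply: eq_bigr => k _; rewrite scalerA.
  by rewrite sum0 scaler0; exact: nbhs_singleton.
have := Wc N (fun k => t * c k) (leqnn N) Wt i iN.
rewrite /t normrM normrM (ger0_norm (ler0n _ 2)) normfV normr_id.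
by rewrite -mulrA mulVf ?normr_eq0 // mulr1; lra.
Qed.

Lemma coef_controlled_neq0 i : b i != 0.
Proof.
apply/eqP => bi0; have := @coef_controlled_free i.+1 (fun k => if k == i then 1 else 0).
rewrite sum_scale_delta // scale1r bi0 => /(_ erefl i (ltnSn i)).
by rewrite eqxx => /eqP; rewrite oner_eq0.
Qed.

Lemma coef_controlled_inj : injective b.
Proof.
suff lt_neq i j : (i < j)%N -> b i != b j.
  move=> i j bij; case: (ltngtP i j) => // [/lt_neq | /lt_neq];
    by rewrite bij eqxx.
move=> ij; apply/eqP => bij; have ij1 : (i < j.+1)%N := ltnW ij.
pose c k : R := (if k == i then 1 else 0) + (if k == j then -1 else 0).
have := @coef_controlled_free j.+1 c _ i ij1.
rewrite /c eqxx (ltn_eqF ij) addr0 => c0.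
suff /c0 /eqP : \sum_(k < j.+1) c k *: b k = 0 by rewrite oner_eq0.
under eq_bigr => k _ do rewrite scalerDl.
rewrite big_split /= !sum_scale_delta //.
by rewrite scale1r scaleN1r bij subrr.
Qed.

End ControlledSequence.
End CoefficientControl.

Section KaltonSequence.
Variables (R : realType) (E : topologicalLmodType R) (S : set E).
Hypotheses (hE : hausdorff_space E) (Sinf : infinite_set S) (hS : abs_cauchy_summable S).

(* At stage n, stage_vec holds b_0, ..., b_(n-1), and the coefficients of the
   combinations lying in stage_ctrl are bounded; the last clause of stage_next
   keeps all later tails inside stage_nbhs. *)
Record stage := Stage { stage_vec : nat -> E; stage_ctrl : set E; stage_nbhs : set E }.

Definition stage_inv n (s : stage) := [/\ nbhs 0 (stage_nbhs s),
  forall y z, stage_nbhs s y -> stage_nbhs s z -> stage_ctrl s (y - z) &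
  coef_bounded n (stage_vec s) (stage_ctrl s)].

Definition stage_next n (s s' : stage) := [/\ S (stage_vec s' n),
  forall i, (i < n)%N -> stage_vec s' i = stage_vec s i &
  forall r y, stage_nbhs s' y -> stage_nbhs s (r *: stage_vec s' n + y)].

Lemma stage_inv0 : stage_inv 0 (Stage (fun=> 0) setT setT).
Proof. by split => //=; exact: filterT. Qed.

Lemma stage_step n s : stage_inv n s -> exists s', stage_inv n.+1 s' /\ stage_next n s s'.
Proof.
case=> W0 WP Pc.
have [W' [W'0 W'b W'W]] := nbhs0_balanced_half W0.
have [e [Se /eqP e0] We] := abs_cauchy_summable_line hS Sinf W'0.
have W'P y z : W' y -> W' z -> stage_ctrl s (y - z).
  move=> W'y W'z; rewrite -[y - z]subr0; apply: WP; last exact: nbhs_singleton.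
  exact: W'W (balancedN W'b W'z).
have [P' [P'0 P'W' P'c]] := coef_bounded_extend hE W'0 W'P Pc We e0.
have [W'' [W''0 W''b W''P']] := nbhs0_balanced_half P'0.
exists (Stage (fun i => if i == n then e else stage_vec s i) P' W''); split.
  by split => //= y z W''y W''z; exact: W''P' (balancedN W''b W''z).
split => /= [|i /ltn_eqF -> //|r y W''y]; rewrite eqxx //.
apply: W'W => //; apply: P'W'; rewrite -[y]addr0.
by apply: W''P' => //; exact: nbhs_singleton.
Qed.

Section Stages.
Variable st : nat -> stage.
Hypothesis st_spec : forall n, stage_inv n (st n) /\ stage_next n (st n) (st n.+1).

Let b i := stage_vec (st i.+1) i.

Lemma stage_vecE m i : (i < m)%N -> stage_vec (st m) i = b i.
Proof.
elim: m => // m IH; rewrite ltnS leq_eqVlt => /orP [/eqP -> //| im].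
by have [_ [_ stE _]] := st_spec m; rewrite stE //; exact: IH.
Qed.

Lemma stage_nbhs_tail n k (c : nat -> R) :
  stage_nbhs (st n) (\sum_(i < k) c (n + i)%N *: b (n + i)%N).
Proof.
elim: k n => [|k IH] n.
  by rewrite big_ord0; have [[W0 _ _] _] := st_spec n; exact: nbhs_singleton.
rewrite big_ord_recl addn0; have [_ [_ _ WW]] := st_spec n; apply: WW.
by under eq_bigr => i _ do rewrite lift0 addnS; exact: IH.
Qed.

Lemma stages_coef_controlled : coef_controlled b.
Proof.
move=> n; have [[W0 WP Pc] _] := st_spec n.
exists (stage_nbhs (st n)) => // N c nN Wsum; apply: Pc.
under eq_bigr => i _ do rewrite stage_vecE //.
have -> : \sum_(i < n) c i *: b i = \sum_(i < N) c i *: b i -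
    \sum_(i < N - n) c (n + i)%N *: b (n + i)%N.
  by rewrite (sum_ord_split (fun i => c i *: b i) nN) addrK.
exact: WP (stage_nbhs_tail _ _ _).
Qed.

Lemma stages_in_S i : S (b i).
Proof. by have [_ []] := st_spec i. Qed.

End Stages.

Lemma kalton_sequence : exists b : nat -> E, (forall i, S (b i)) /\ coef_controlled b.
Proof.
have [st st_spec] := nat_rec_choice stage_inv0 stage_step.
by exists (fun i => stage_vec (st i.+1) i); split;
  [exact: stages_in_S | exact: stages_coef_controlled].
Qed.

End KaltonSequence.

Lemma open_preimage_of_nbhs (X Y : topologicalType) (f : X -> Y) :
  (forall x U, nbhs x U -> exists2 V, nbhs (f x) V & f @^-1` V `<=` U) ->
  forall U, open U -> exists V, open V /\ U = f @^-1` V.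
Proof.
move=> fnbhs U oU; exists (\bigcup_(W in [set W | f @^-1` W `<=` U]) W°); split.
  by apply: bigcup_open => W _; exact: open_interior.
apply/seteqP; split => [x Ux | x [W WU /interior_subset Wfx]]; last exact: WU.
have [W Wfx WU] := fnbhs x U (open_nbhs_nbhs (conj oU Ux)).
by exists W.
Qed.

Section KaltonMap.
Variables (R : realType) (E : topologicalLmodType R).

Lemma lS_coord0 (B : set E) (f : @lS R E B) x : ~ B x -> set_val f x = 0.
Proof.
have [_ sB] : lS_set B (set_val f) := set_valP f.
by move=> nBx; apply/eqP; apply: contraT => /sB.
Qed.

Lemma lS_coord_near (B : set E) (f : @lS R E B) x (e : R) : 0 < e ->
  \forall g \near f, `|set_val g x - set_val f x| < e.
Proof.
move=> e0; have coord_cont : continuous (fun g : @lS R E B => set_val g x).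
  move=> g; apply: (@continuous_comp _ {ptws E -> R} _ set_val (fun h => h x)).
    exact: initial_continuous.
  exact: proj_continuous.
by apply: filterS (cvgr_dist_lt _ _ (coord_cont f) _ e0) => g; rewrite distrC.
Qed.

Variable b : nat -> E.
Hypotheses (b_sum : abs_cauchy_summable (range b)) (b_ctrl : coef_controlled b).
Local Notation B := (range b).

Lemma lK_sum_eventually (f : @lS R E B) :
  \forall M \near \oo, lK f = \sum_(i < M) set_val f (b i) *: b i.
Proof.
have [fsupp sB] : lS_set B (set_val f) := set_valP f.
have b_inj : {in b @^-1` supp (set_val f) &, injective b}.
  by move=> i j _ _; exact: (coef_controlled_inj b_ctrl).
have [N Nsupp] := finite_nat_ub (finite_preimage b_inj fsupp).
exists N => // M /= NM.
rewrite /lK (fsbig_widen _ (b @` `I_M)).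
- rewrite fsbig_image -?fsbig_ord // => i j _ _.
  exact: (coef_controlled_inj b_ctrl).
- move=> x fx; have [i _ bix] := sB _ fx; exists i => //.
  by rewrite /= (leq_trans _ NM) // Nsupp //= /preimage bix.
- move=> x [[i _ <-] /negP]; rewrite negbK => /eqP /= ->.
  by rewrite scale0r.
Qed.

Lemma lKB_eventually (f g : @lS R E B) : \forall M \near \oo,
  lK g - lK f = \sum_(i < M) (set_val g (b i) - set_val f (b i)) *: b i.
Proof.
apply: filterS2 (lK_sum_eventually f) (lK_sum_eventually g) => M -> ->.
by rewrite -sumrB; apply: eq_bigr => i _; rewrite scalerBl.
Qed.

Lemma lK_injective : injective (@lK R E B).
Proof.
move=> f g lKfg; apply: val_inj; rewrite -!set_valE.
apply: functional_extensionality_dep => x.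
have [[k _ <-] | nBx] := pselect (B x); last by rewrite !lS_coord0.
have [M [lKE kM]] := filter_ex (filterI (lKB_eventually g f) (nbhs_infty_gt k)).
move: lKE; rewrite lKfg subrr => /esym sum0.
pose c i := set_val f (b i) - set_val g (b i).
by have /eqP := coef_controlled_free b_ctrl (c := c) sum0 kM; rewrite subr_eq0 => /eqP.
Qed.

Lemma lK_continuous : continuous (@lK R E B).
Proof.
move=> f U /nbhs_translate0 U0.
have [V V0 VU] := nbhs0_add U0.
have [F [Ffin FV]] := abs_cauchy_summable_span b_sum V0.
have b_inj : {in b @^-1` F &, injective b}
  by move=> i j _ _ /(coef_controlled_inj b_ctrl).
have [m Fm] := finite_nat_ub (finite_preimage b_inj Ffin).
have [d d0 Hd] := small_coef_comb b m V0.
pose c (g : @lS R E B) i := set_val g (b i) - set_val f (b i).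
have near_f : \forall g \near f, forall i : 'I_m, `|c g i| < d.
  apply: (@filter_forall _ _ (fun (i : 'I_m) g => `|c g i| < d) (nbhs f) _) => i.
  exact: lS_coord_near.
suff : nbhs f (@lK R E B @^-1` U) by [].
apply: filterS near_f => g near_g /=.
have [M [lKE mM]] := filter_ex (filterI (lKB_eventually f g) (nbhs_infty_ge m)).
rewrite -[lK g](subrKC (lK f)) lKE (sum_ord_split (fun i => c g i *: b i) mM).
apply: VU; first by apply: Hd => i im; exact: (near_g (Ordinal im)).
apply: (FV _ (fun i => b (m + i)%N) (fun i => c g (m + i)%N)) => i _.
by split; [exists (m + i)%N | move=> /Fm; rewrite /= ltnNge leq_addr].
Qed.

Lemma lK_coord_nbhs (f : @lS R E B) x (e : R) : 0 < e ->
  exists2 V, nbhs (lK f) V &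
    forall g : @lS R E B, V (lK g) -> `|set_val g x - set_val f x| < e.
Proof.
move=> e0; have [[k _ <-] | nBx] := pselect (B x); last first.
  by exists setT => [|g _]; [exact: filterT | rewrite !lS_coord0 // subrr normr0].
have [W W0 Wc] := b_ctrl k.+1.
exists [set y | W (e^-1 *: (y - lK f))].
  exact: (nbhs0_translate (lK f) (nbhs0_scaler e^-1 W0)).
move=> g /=.
have [M [lKE kM]] := filter_ex (filterI (lKB_eventually f g) (nbhs_infty_gt k)).
rewrite lKE scaler_sumr; under eq_bigr => i _ do rewrite scalerA.
move=> /(Wc M (fun i => e^-1 * (set_val g (b i) - set_val f (b i))) kM) /(_ k (ltnSn k)).
by rewrite normrM gtr0_norm ?invr_gt0 // mulrC ltr_pdivrMr // mul1r.
Qed.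

Lemma lK_nbhs (f : @lS R E B) U : nbhs f U ->
  exists2 V, nbhs (lK f) V & @lK R E B @^-1` V `<=` U.
Proof.
move=> [_ [[W oW <-] Wf] WU].
(* The image under set_val of the pullback by lK of the neighbourhoods of lK f. *)
pose G : set_system {ptws E -> R} :=
  [set A | exists2 V, nbhs (lK f) V & forall g : @lS R E B, V (lK g) -> A (set_val g)].
have G_filter : Filter G.
  split; first by exists setT => //; exact: filterT.
    move=> A1 A2 [V1 V1f H1] [V2 V2f H2].
    by exists (V1 `&` V2) => [|g [/H1 ? /H2 ?]]; first exact: filterI.
  by move=> A1 A2 A12 [V Vf HV]; exists V => // g /HV /A12.
have : G --> (set_val f : {ptws E -> R}).
  apply/pointwise_cvgP => x; apply/cvgrPdist_lt => e e0.
  have [V Vf HV] := lK_coord_nbhs f x e0.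
  by exists V => // g /HV; rewrite distrC.
move=> /(_ W (open_nbhs_nbhs (conj oW Wf))) [V Vf HV].
by exists V => // g /HV /WU.
Qed.

Lemma lK_embedding : topological_embedding (@lK R E B).
Proof.
split; [exact: lK_injective | exact: lK_continuous |].
by apply: open_preimage_of_nbhs => f; exact: lK_nbhs.
Qed.

End KaltonMap.

Unset Implicit Arguments.

Theorem theorem10p4 (R : realType) (E : topologicalLmodType R)
  (hE : hausdorff_space E) (S : set E) :
  infinite_set S -> abs_cauchy_summable S ->
  exists B : set E,
    [/\ B `<=` S, ~ B 0, infinite_set B & topological_embedding (@lK R E B)].
Proof.
move=> Sinf hS; have [b [bS b_ctrl]] := kalton_sequence hE Sinf hS.
have bS_sub : range b `<=` S by move=> _ [i _ <-].
exists (range b); split => //.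
- by move=> [i _ /eqP]; apply/negP; exact: coef_controlled_neq0.
- move=> /(finite_preimage (in2W (coef_controlled_inj b_ctrl))).
  by rewrite preimage_range; exact: infinite_nat.
- exact: lK_embedding (abs_cauchy_summableS bS_sub hS) b_ctrl.
Qed.
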